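(* With the notation of the context, for all admissible fixed frequencies, $$|S_{kk_1}|\lesssim (N_2\wedge N_3)^{2-\alpha}\langle k_1-k\rangle^{-1}+1,\qquad |S_{kk_3}|\lesssim (N_1\wedge N_2)^{2-\alpha}\langle k-k_3\rangle^{-1}+1,$$ $$|S_{k_1k_2}|\lesssim N_3^{2-\alpha}\langle k_1-k_2\rangle^{-1}+1,\qquad |S_{k_2k_3}|\lesssim N_1^{2-\alpha}\langle k_2-k_3\rangle^{-1}+1.$$
   Context: Fix $\alpha\in(1,2)$, dyadic numbers $1\le N_1,N_2,N_3\le N$, a real number $m$ and a constant $C_0>0$. Let $S$ be the set of $(k,k_1,k_2,k_3)\in\mathbb Z^4$ with $k=k_1-k_2+k_3$, $k_2\notin\{k_1,k_3\}$, $\big||k_1|^\alpha-|k_2|^\alpha+|k_3|^\alpha-|k|^\alpha-m\big|\le C_0$, $|k|\le N$ and $|k_j|\le N_j$ for $j=1,2,3$. When some of the variables are fixed, $S$ with those variables as subscripts denotes the set of the remaining variables for which the quadruple lies in $S$ (e.g. $S_{kk_1}=\{(k_2,k_3):(k,k_1,k_2,k_3)\in S\}$, $S_k=\{(k_1,k_2,k_3):(k,k_1,k_2,k_3)\in S\}$). $|A|$ is the cardinality of $A$, $\langle x\rangle=(1+|x|^2)^{1/2}$, $a\wedge b=\min(a,b)$, $a\vee b=\max(a,b)$. $A\lesssim B$ means $A\le CB$ with $C$ depending only on $\alpha$ and $C_0$ (uniform in $m$, the $N$'s and the fixed frequencies). *)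

From HB Require Import structures.
From mathcomp Require Import all_boot all_order all_algebra.
From mathcomp Require Import all_classical all_reals all_analysis.
Set Implicit Arguments. Unset Strict Implicit. Unset Printing Implicit Defensive.
Import Order.TTheory GRing.Theory Num.Theory.
Local Open Scope ring_scope.

Definition dyadic (N : nat) : Prop := exists j : nat, N = (2 ^ j)%N.

(* |k|^alpha, with powR (0 `^ alpha = 0 for alpha <> 0) *)
Definition pw (R : realType) (alpha : R) (k : int) : R :=
  ((`|k|%N)%:R : R) `^ alpha.

Definition jbr (R : realType) (x : int) : R := Num.sqrt (1 + (x%:~R : R) ^+ 2).

Definition inS (R : realType) (alpha C0 m : R) (N N1 N2 N3 : nat)
    (k k1 k2 k3 : int) : bool :=
  [&& k == k1 - k2 + k3, k2 != k1, k2 != k3,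
      `|pw alpha k1 - pw alpha k2 + pw alpha k3 - pw alpha k - m| <= C0,
      (`|k| <= N%:Z)%R, (`|k1| <= N1%:Z)%R, (`|k2| <= N2%:Z)%R
      & (`|k3| <= N3%:Z)%R].

Definition box (M : nat) : seq int :=
  [seq (i%:Z - M%:Z)%R | i <- iota 0 (2 * M).+1].

(* cardinality of {(a,b) : P a b} where P forces |a| <= M, |b| <= M'
   (so counting over the box counts the whole set) *)
Definition card2 (P : int -> int -> bool) (M M' : nat) : nat :=
  count (fun p : int * int => P p.1 p.2) [seq (a, b) | a <- box M, b <- box M'].

Definition card_S_kk1 (R : realType) (alpha C0 m : R) (N N1 N2 N3 : nat) (k k1 : int) :=
  card2 (fun k2 k3 => inS alpha C0 m N N1 N2 N3 k k1 k2 k3) N2 N3.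
Definition card_S_kk3 (R : realType) (alpha C0 m : R) (N N1 N2 N3 : nat) (k k3 : int) :=
  card2 (fun k1 k2 => inS alpha C0 m N N1 N2 N3 k k1 k2 k3) N1 N2.
Definition card_S_k1k2 (R : realType) (alpha C0 m : R) (N N1 N2 N3 : nat) (k1 k2 : int) :=
  card2 (fun k k3 => inS alpha C0 m N N1 N2 N3 k k1 k2 k3) N N3.
Definition card_S_k2k3 (R : realType) (alpha C0 m : R) (N N1 N2 N3 : nat) (k2 k3 : int) :=
  card2 (fun k k1 => inS alpha C0 m N N1 N2 N3 k k1 k2 k3) N N1.

(* Once two frequencies are fixed, the two free ones form a pair (a, a + h) with
   h <> 0 fixed, and membership in S says that g(a) = |a + h|^alpha - |a|^alpha lies
   in a fixed window of width 2 C0.  If |a| <= A and |a + h| <= B, every point of the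
   segment joining two solutions has absolute value at most L = min(A, B) + |h|, and
   there g is strictly monotone with slope >~ alpha (alpha - 1) L^(alpha - 2) |h|:
   g' is alpha times the increment of t |-> sgn t |t|^(alpha - 1) over an interval
   of length |h|, and that function has slope >= (alpha - 1) L^(alpha - 2) on [-L, L].
   Hence two solutions lie at distance
   <~ L^(2 - alpha) / |h| <~ min(A, B)^(2 - alpha) / <h> + 1,
   and a set of integers of diameter D has at most 2 D + 1 elements.
   To avoid differentiating |t|^alpha at 0, the slope bound is derived on steps of
   length <= |h| / 2 from the tangent-line inequality of the convex |t|^alpha, and the
   steps are then chained. *)

From Pilot Require Import Defs.
From HB Require Import structures.
From mathcomp Require Import all_boot all_order all_algebra.
From mathcomp Require Import all_classical all_reals all_analysis.
From mathcomp.algebra_tactics Require Import ring lra.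
From mathcomp.zify Require Import zify.
Set Implicit Arguments.
Unset Strict Implicit.
Unset Printing Implicit Defensive.
Import Order.TTheory GRing.Theory Num.Theory.
Local Open Scope ring_scope.

Section Powers.
Variable R : realType.
Implicit Types p r a b c t L : R.

Lemma powR_MVT p a b : 0 < a -> a < b ->
  exists2 c, a < c < b & b `^ p - a `^ p = p * c `^ (p - 1) * (b - a).
Proof.
move=> a0 ab.
have der x : x \in `]a, b[ -> is_derive x 1 (fun y : R => y `^ p) (p * x `^ (p - 1)).
  rewrite in_itv /= => /andP[ax _]; apply: is_derive1_powR.
  exact: lt_trans ax.
have [|c] := MVT ab der; last by rewrite in_itv /= => cab ->; exists c.
apply: derivable_within_continuous => x; rewrite in_itv /= => /andP[ax _].
by apply: derivable_powR; rewrite in_itv /= andbT; apply: lt_le_trans ax.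
Qed.

Lemma le0_ger_powR r a b : r <= 0 -> 0 < a -> a <= b -> b `^ r <= a `^ r.
Proof.
move=> r0 a0 ab; have [s -> s0] : exists2 s, r = - s & 0 <= s.
  by exists (- r); [rewrite opprK | lra].
rewrite !powRN lef_pV2 ?posrE ?powR_gt0 //; last exact: lt_le_trans ab.
by apply: ge0_ler_powR; rewrite ?nnegrE; lra.
Qed.

Lemma powR_subadd r a b : 0 <= r <= 1 -> 0 <= a -> 0 <= b ->
  (a + b) `^ r <= a `^ r + b `^ r.
Proof.
move=> /andP[r0 r1] a0 b0.
have [->|a0'] := eqVneq a 0; first by rewrite add0r lerDr powR_ge0.
have [->|b0'] := eqVneq b 0; first by rewrite addr0 lerDl powR_ge0.
have ap : 0 < a by rewrite lt_neqAle eq_sym a0' a0.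
have bp : 0 < b by rewrite lt_neqAle eq_sym b0' b0.
set s := a + b; have sp : 0 < s by rewrite /s; lra.
(* [x `^ r >= x] on [0, 1], applied to the weights [a / s] and [b / s] *)
have part x : 0 < x -> x <= s -> x / s * s `^ r <= x `^ r.
  move=> x0 xs; rewrite -[in leRHS](divfK (lt0r_neq0 sp) x) powRM ?divr_ge0 //; try lra.
  apply: ler_wpM2r; first exact: powR_ge0.
  by apply: ger1_powR => //; rewrite divr_gt0 //= ler_pdivrMr // mul1r.
have := part a ap ltac:(rewrite /s; lra); have := part b bp ltac:(rewrite /s; lra).
have -> : b / s * s `^ r = s `^ r - a / s * s `^ r.
  by rewrite /s; field; apply: lt0r_neq0.
lra.
Qed.

Lemma powR_tangent_le p a b : 1 < p -> 0 <= a -> 0 <= b ->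
  a `^ p + p * a `^ (p - 1) * (b - a) <= b `^ p.
Proof.
move=> p1 a0 b0; have p0 : p != 0 by apply: lt0r_neq0; lra.
have p10 : p - 1 != 0 by apply: lt0r_neq0; lra.
have [->|a0'] := eqVneq a 0; first by rewrite !powR0 // mulr0 mul0r addr0 powR_ge0.
have ap : 0 < a by rewrite lt_neqAle eq_sym a0' a0.
have aa := powR_ge0 a (p - 1); have Ea := mulr_powRB1 a0 (lt_trans ltr01 p1).
have [->|b0'] := eqVneq b 0.
  have : 0 <= (p - 1) * (a * a `^ (p - 1)) by apply: mulr_ge0; [lra | apply: mulr_ge0].
  by rewrite powR0 //; nra.
have bp : 0 < b by rewrite lt_neqAle eq_sym b0' b0.
have [ab|ba|->] := ltgtP a b; last by rewrite subrr mulr0 addr0.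
- have [c /andP[ac cb] E] := powR_MVT p ap ab.
  have : a `^ (p - 1) <= c `^ (p - 1) by apply: ge0_ler_powR; rewrite ?nnegrE; lra.
  have : 0 <= p * (b - a) by apply: mulr_ge0; lra.
  nra.
- have [c /andP[bc ca] E] := powR_MVT p bp ba.
  have : c `^ (p - 1) <= a `^ (p - 1) by apply: ge0_ler_powR; rewrite ?nnegrE; lra.
  have : 0 <= p * (a - b) by apply: mulr_ge0; lra.
  nra.
Qed.

Lemma powR_concave_increment p a b L : 0 < p < 1 -> 0 <= a -> a <= b -> b <= L ->
  p * L `^ (p - 1) * (b - a) <= b `^ p - a `^ p.
Proof.
move=> /andP[p0 p1] a0 ab bL; have LL := powR_ge0 L (p - 1).
have [->|ab'] := eqVneq a b; first by rewrite !subrr mulr0.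
have {}ab : a < b by rewrite lt_neqAle ab' ab.
have [->|a0'] := eqVneq a 0.
  rewrite powR0 ?lt0r_neq0 // !subr0 -(mulr_powRB1 (ltW (le_lt_trans a0 ab)) p0).
  have : L `^ (p - 1) <= b `^ (p - 1) by apply: le0_ger_powR; lra.
  have : 0 <= (1 - p) * (b * L `^ (p - 1)) by apply: mulr_ge0; [lra | apply: mulr_ge0; lra].
  nra.
have ap : 0 < a by rewrite lt_neqAle eq_sym a0' a0.
have [c /andP[ac cb] ->] := powR_MVT p ap ab.
have : L `^ (p - 1) <= c `^ (p - 1) by apply: le0_ger_powR; lra.
have : 0 <= p * (b - a) by apply: mulr_ge0; lra.
nra.
Qed.
End Powers.

Section SignedPowers.
Variable R : realType.
Implicit Types p a b t L : R.

Definition abs_powR p t := `|t| `^ p.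

(* [p * sgn_powR (p - 1)] is the derivative of [abs_powR p]. *)
Definition sgn_powR p t := Num.sg t * `|t| `^ p.

Lemma abs_powRN p t : abs_powR p (- t) = abs_powR p t.
Proof. by rewrite /abs_powR normrN. Qed.

Lemma sgn_powRN p t : sgn_powR p (- t) = - sgn_powR p t.
Proof. by rewrite /sgn_powR sgrN normrN mulNr. Qed.

Lemma ge0_sgn_powRE p t : p != 0 -> 0 <= t -> sgn_powR p t = t `^ p.
Proof.
rewrite /sgn_powR => p0; rewrite le_eqVlt => /predU1P[<-|t0].
  by rewrite sgr0 mul0r powR0.
by rewrite gtr0_sg // gtr0_norm // mul1r.
Qed.

Lemma abs_powR_tangent_le p a b : 1 < p ->
  abs_powR p a + p * sgn_powR (p - 1) a * (b - a) <= abs_powR p b.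
Proof.
move=> p1; wlog a0 : a b / 0 <= a.
  move=> W; have [/W//|a0] := leP 0 a.
  have := W (- a) (- b) ltac:(lra); rewrite !abs_powRN sgn_powRN.
  by have -> : p * - sgn_powR (p - 1) a * (- b - - a) = p * sgn_powR (p - 1) a * (b - a) by ring.
have p10 : p - 1 != 0 by apply: lt0r_neq0; lra.
rewrite [abs_powR p a]/abs_powR (ger0_norm a0) ge0_sgn_powRE //.
apply: le_trans (powR_tangent_le p1 a0 (normr_ge0 b)); rewrite lerD2l.
apply: ler_wpM2l; last by rewrite lerD2r ler_norm.
by apply: mulr_ge0; [lra | apply: powR_ge0].
Qed.

Lemma sgn_powR_increment p a b L : 0 < p < 1 -> a <= b -> `|a| <= L -> `|b| <= L ->
  p * L `^ (p - 1) * (b - a) <= sgn_powR p b - sgn_powR p a.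
Proof.
move=> p01 ab; have p0 : p != 0 by apply: lt0r_neq0; lra.
rewrite !ler_norml => /andP[La aL] /andP[Lb bL].
have incr u v : 0 <= u -> u <= v -> v <= L ->
    p * L `^ (p - 1) * (v - u) <= sgn_powR p v - sgn_powR p u.
  by move=> u0 uv vL; rewrite !ge0_sgn_powRE //; [apply: powR_concave_increment | lra].
have [a0|a0] := leP 0 a; first exact: incr.
have [b0|b0] := leP b 0.
  by have := incr (- b) (- a) ltac:(lra) ltac:(lra) ltac:(lra); rewrite !sgn_powRN; lra.
have sgn0 : sgn_powR p 0 = 0 by rewrite /sgn_powR sgr0 mul0r.
have := incr 0 b (lexx 0) ltac:(lra) bL; have := incr 0 (- a) (lexx 0) ltac:(lra) ltac:(lra).
rewrite sgn_powRN sgn0; lra.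
Qed.
End SignedPowers.

Section SecondDifference.
Variable R : realType.

Lemma slope_ge_of_local (f : R -> R) (c d a b : R) : 0 < d -> a <= b ->
  (forall u v, a <= u -> u <= v -> v <= b -> v - u <= d -> c * (v - u) <= f v - f u) ->
  c * (b - a) <= f b - f a.
Proof.
move=> d0 ab loc.
suff chain n u : a <= u <= b -> b - u <= n%:R * d -> c * (b - u) <= f b - f u.
  apply: (chain (Num.bound ((b - a) / d))); first by rewrite lexx ab.
  by rewrite -ler_pdivrMr // ltW // archi_boundP // divr_ge0 // ?subr_ge0 // ltW.
elim: n u => [|n IH] u /andP[au ub] hu.
  have -> : u = b by rewrite mul0r in hu; lra.
  by rewrite !subrr mulr0.
have [near|far] := leP (b - u) d; first exact: loc.
have := IH (u + d) ltac:(lra); rewrite -natr1 mulrDl mul1r in hu.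
have := loc u (u + d) au ltac:(lra) ltac:(lra) ltac:(lra).
lra.
Qed.

Lemma abs_powR_second_difference (p h x y L : R) : 1 < p < 2 -> 0 < h -> x <= y ->
  `|x| <= L -> `|y| <= L -> `|x + h| <= L -> `|y + h| <= L ->
  p * (p - 1) * L `^ (p - 2) * (h / 2) * (y - x) <=
    (abs_powR p (y + h) - abs_powR p y) - (abs_powR p (x + h) - abs_powR p x).
Proof.
move=> /andP[p1 p2] h0 xy.
rewrite !ler_norml => /andP[Lx xL] /andP[Ly yL] /andP[Lxh xhL] /andP[Lyh yhL].
pose g t := abs_powR p (t + h) - abs_powR p t.
(* On a step [u <= v <= u + h/2], the tangents at [u + h] and [v] bound [g v - g u]
   below by [p (v - u)] times the increment of [sgn_powR (p - 1)] over [[v, u + h]]. *)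
apply: (slope_ge_of_local (f := g) (d := h / 2)) => // [|u v xu uv vy vuh]; first lra.
set Q := L `^ (p - 2); have Q0 : 0 <= Q by apply: powR_ge0.
have T1 := abs_powR_tangent_le (u + h) (v + h) p1.
have T2 := abs_powR_tangent_le v u p1.
have I : (p - 1) * Q * (u + h - v) <= sgn_powR (p - 1) (u + h) - sgn_powR (p - 1) v.
  have -> : Q = L `^ (p - 1 - 1) by rewrite /Q; congr (_ `^ _); ring.
  by apply: sgn_powR_increment; rewrite ?ler_norml; lra.
have : 0 <= p * (v - u) by apply: mulr_ge0; lra.
have : 0 <= p * (p - 1) * Q * (v - u) by apply: mulr_ge0; [apply: mulr_ge0; [nra|] | lra].
rewrite /g; nra.
Qed.

Lemma abs_powR_increment_separation (p C0 h x y A B : R) : 1 < p < 2 -> 1 <= `|h| ->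
  `|x| <= A -> `|y| <= A -> `|x + h| <= B -> `|y + h| <= B ->
  `|(abs_powR p (y + h) - abs_powR p y) - (abs_powR p (x + h) - abs_powR p x)| <= C0 ->
  `|y - x| <= 2 * C0 / (p * (p - 1)) * (Num.min A B `^ (2 - p) / `|h| + 1).
Proof.
move=> p12 h1; wlog xy : x y / x <= y.
  move=> W; have [/W//|yx] := leP x y; move=> xA yA xB yB D.
  by rewrite distrC; apply: W; rewrite 1?distrC // ltW.
wlog h0 : h x y A B h1 xy / 0 < h.
  move=> W; have [h0|h0] := leP h 0; last exact: W.
  move=> xA yA xB yB D; rewrite minC -[`|h|]normrN.
  have -> : y - x = y + h - (x + h) by ring.
  have h1' := h1; rewrite ler0_norm // in h1'.
  apply: (W (- h) (x + h) (y + h) B A); rewrite ?normrN ?addrK //; try lra.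
  by rewrite -normrN; move: D; congr (`|_| <= _); ring.
move=> xA yA xB yB D; have C00 : 0 <= C0 := le_trans (normr_ge0 _) D.
rewrite (gtr0_norm h0) in h1 *; rewrite ger0_norm ?subr_ge0 //.
set M := Num.min A B; have M0 : 0 <= M by rewrite le_min; apply/andP; split;
  [apply: le_trans xA | apply: le_trans xB].
set L := M + h; have L0 : 0 < L by rewrite /L; lra.
have inL t : `|t| <= A -> `|t + h| <= B -> `|t| <= L /\ `|t + h| <= L.
  move=> tA tB; have := ler_normD t h; have := ler_normB (t + h) h.
  rewrite addrK (gtr0_norm h0) => n1 n2.
  by rewrite /L /M -!lerBlDr !le_min; split; apply/andP; split; lra.
have [xL xhL] := inL x xA xB; have [yL yhL] := inL y yA yB.
have SD := abs_powR_second_difference p12 h0 xy xL yL xhL yhL.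
have [p1 p2] : 1 < p /\ p < 2 by apply/andP.
have sub : L `^ (2 - p) <= M `^ (2 - p) + h.
  apply: le_trans (powR_subadd _ M0 (ltW h0)) _; first by apply/andP; split; lra.
  by rewrite lerD2l ler1_powR //; lra.
set P := L `^ (2 - p); have P0 : 0 < P := powR_gt0 _ L0.
have EP : L `^ (p - 2) = P^-1 by rewrite /P -powRN opprB.
rewrite EP in SD.
set K := p * (p - 1) in SD *; have K0 : 0 < K by rewrite /K; apply: mulr_gt0; lra.
have c0 : 0 <= 2 * C0 / (K * h) by apply: divr_ge0; [lra | apply: mulr_ge0; lra].
apply: (@le_trans _ _ (2 * C0 / (K * h) * P)).
  have -> : y - x = K * P^-1 * (h / 2) * (y - x) * (2 / (K * h) * P).
    by field; apply/and3P; split; apply: lt0r_neq0.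
  have -> : 2 * C0 / (K * h) * P = C0 * (2 / (K * h) * P) by ring.
  rewrite ler_wpM2r //.
    by apply: mulr_ge0 (ltW P0); apply: divr_ge0; [lra | apply: mulr_ge0; lra].
  exact: le_trans SD (le_trans (ler_norm _) D).
have -> : 2 * C0 / K * (M `^ (2 - p) / h + 1) = 2 * C0 / (K * h) * (M `^ (2 - p) + h).
  by field; apply/andP; split; apply: lt0r_neq0.
exact: ler_wpM2l.
Qed.
End SecondDifference.

Lemma size_uniq_int_le (s : seq int) (n : nat) : uniq s ->
  {in s &, forall a b, `|b - a| <= n%:Z} -> (size s <= (2 * n).+1)%N.
Proof.
case: s => [//|a0 s] us near.
rewrite -(size_iota 0 (2 * n).+1) -(size_map (fun i : nat => a0 - n%:Z + i%:Z)).
apply: uniq_leq_size => // b bs; apply/mapP.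
have := near a0 b (mem_head _ _) bs; rewrite ler_norml => /andP[lo hi].
exists (absz (b - a0 + n%:Z)); last by rewrite gez0_abs; lia.
by rewrite mem_iota add0n -ltz_nat gez0_abs; lia.
Qed.

Lemma box_uniq (M : nat) : uniq (box M).
Proof. by rewrite map_inj_uniq ?iota_uniq // => i j /addIr [->]. Qed.

Lemma card2_le_diam (R : realType) (P : int -> int -> bool) (A B : nat) (h : int) (D : R) :
  0 <= D -> (forall a b, P a b -> b = a + h) ->
  (forall a b a' b', P a b -> P a' b' -> `|(a' - a)%:~R : R| <= D) ->
  (Defs.card2 P A B)%:R <= 2 * D + 1.
Proof.
move=> D0 graph near; rewrite /Defs.card2 -size_filter.
set l := seq.filter _ _; have Pl p : p \in l -> P p.1 p.2 by rewrite mem_filter => /andP[].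
have ul : uniq (map fst l).
  rewrite map_inj_in_uniq ?filter_uniq ?allpairs_uniq ?box_uniq //.
    by move=> [a b] [a' b'] _ _ [-> ->].
  by move=> [a b] [a' b'] /Pl /graph /= -> /Pl /graph /= -> /= ->.
have n0 : 0 <= Num.floor D by rewrite floor_ge0.
have size_l : (size l <= (2 * absz (Num.floor D)).+1)%N.
  rewrite -(size_map fst); apply: size_uniq_int_le ul _ => _ _ /mapP[p pl ->] /mapP[q ql ->].
  rewrite gez0_abs // floor_ge_int intr_norm.
  exact: near (Pl _ pl) (Pl _ ql).
apply: le_trans (_ : ((2 * absz (Num.floor D)).+1)%:R <= _); first by rewrite ler_nat.
rewrite -addn1 natrD natrM natr_absz ger0_norm ?intr_ge0 //.
by have := floor_le D; lra.
Qed.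

Section Counting.
Variable R : realType.

Lemma jbr_gt0 (h : int) : 0 < jbr R h.
Proof. by rewrite sqrtr_gt0 ltr_pwDl // sqr_ge0. Qed.

Lemma jbrN (h : int) : jbr R (- h) = jbr R h.
Proof. by rewrite /jbr rmorphN sqrrN. Qed.

Lemma jbr_le_twice_norm (h : int) : h != 0 -> jbr R h <= 2 * `|h%:~R : R|.
Proof.
move=> h0; have h1 : 1 <= `|h%:~R : R| by rewrite norm_intr_ge1 ?intr_int ?intr_eq0.
rewrite -[leRHS]ger0_norm ?mulr_ge0 // -sqrtr_sqr ler_wsqrtr //.
by rewrite -[(h%:~R : R) ^+ 2]real_normK ?num_real //; nra.
Qed.

Lemma int_norm_le_natr (z : int) (n : nat) : (`|z| <= n%:Z)%R -> `|z%:~R : R| <= n%:R.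
Proof. by rewrite -intr_norm -[n%:R]/((n%:Z)%:~R) ler_int. Qed.

Lemma card2_increment_band_le (p C0 c : R) (P : int -> int -> bool) (A B : nat) (h : int) :
  1 < p < 2 -> 0 <= C0 ->
  (forall a b, P a b -> [/\ b = a + h, h != 0, `|a| <= A%:Z, `|b| <= B%:Z &
     `|abs_powR p b%:~R - abs_powR p a%:~R - c| <= C0]) ->
  (Defs.card2 P A B)%:R <= (16 * C0 / (p * (p - 1)) + 1) *
    (Num.min (A%:R : R) B%:R `^ (2 - p) / jbr R h + 1).
Proof.
move=> p12 C00 band; have [p1 p2] : 1 < p /\ p < 2 by apply/andP.
set K := 8 * C0 / (p * (p - 1)); have K0 : 0 <= K by apply: divr_ge0; nra.
set X := _ / jbr R h; have X0 : 0 <= X by rewrite divr_ge0 ?powR_ge0 ?ltW ?jbr_gt0.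
have -> : 16 * C0 / (p * (p - 1)) = 2 * K by rewrite /K; ring.
apply: (@le_trans _ _ (2 * (K * (X + 1)) + 1)); last by nra.
apply: (@card2_le_diam _ _ _ _ h); first by apply: mulr_ge0; lra.
  by move=> a b /band[].
move=> a b a' b' /band[-> h0 aA bA ph] /band[-> _ aA' bB' ph'].
have h1 : 1 <= `|h%:~R : R| by rewrite norm_intr_ge1 ?intr_int ?intr_eq0.
rewrite intrB; apply: le_trans
  (abs_powR_increment_separation (C0 := 2 * C0) (A := A%:R) (B := B%:R) p12 h1 _ _ _ _ _) _.
- exact: int_norm_le_natr.
- exact: int_norm_le_natr.
- by rewrite -intrD; apply: int_norm_le_natr.
- by rewrite -intrD; apply: int_norm_le_natr.
- rewrite -!intrD; have -> : forall u v, u - v = (u - c) - (v - c) by move=> u v; ring.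
  by apply: le_trans (ler_normB _ _) _; lra.
have hJ : `|h%:~R : R|^-1 <= 2 / jbr R h.
  rewrite -[2 / _]invf_div lef_pV2 ?posrE ?divr_gt0 ?jbr_gt0 //; last lra.
  by rewrite ler_pdivrMr // mulrC jbr_le_twice_norm.
have : Num.min (A%:R : R) B%:R `^ (2 - p) / `|h%:~R| <= 2 * X.
  by rewrite /X mulrCA ler_wpM2l ?powR_ge0.
have -> : 2 * (2 * C0) / (p * (p - 1)) = K / 2 by rewrite /K; field; nra.
nra.
Qed.
End Counting.

Lemma pw_abs_powR (R : realType) (p : R) (z : int) : pw p z = abs_powR p z%:~R.
Proof. by rewrite /pw /abs_powR natr_absz intr_norm. Qed.

Lemma inSE (R : realType) (alpha C0 m : R) (N N1 N2 N3 : nat) (k k1 k2 k3 : int) :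
  inS alpha C0 m N N1 N2 N3 k k1 k2 k3 ->
  [/\ k = k1 - k2 + k3, k2 - k1 != 0, k2 - k3 != 0,
    `|abs_powR alpha k1%:~R - abs_powR alpha k2%:~R + abs_powR alpha k3%:~R
      - abs_powR alpha k%:~R - m| <= C0
    & [/\ `|k| <= N%:Z, `|k1| <= N1%:Z, `|k2| <= N2%:Z & `|k3| <= N3%:Z]%R].
Proof.
rewrite /inS !pw_abs_powR !subr_eq0.
by case/and5P=> /eqP -> -> -> -> /and4P[].
Qed.

Theorem lemma2p5 (R : realType) (alpha C0 : R) :
  1 < alpha < 2 -> 0 < C0 ->
  exists C : R, 0 < C /\
  forall (N N1 N2 N3 : nat) (m : R),
    dyadic N -> dyadic N1 -> dyadic N2 -> dyadic N3 ->
    (1 <= N1 <= N)%N -> (1 <= N2 <= N)%N -> (1 <= N3 <= N)%N ->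
    (forall k k1 : int,
       (card_S_kk1 alpha C0 m N N1 N2 N3 k k1)%:R
         <= C * (((minn N2 N3)%:R `^ (2 - alpha)) / jbr R (k1 - k) + 1)) /\
    (forall k k3 : int,
       (card_S_kk3 alpha C0 m N N1 N2 N3 k k3)%:R
         <= C * (((minn N1 N2)%:R `^ (2 - alpha)) / jbr R (k - k3) + 1)) /\
    (forall k1 k2 : int,
       (card_S_k1k2 alpha C0 m N N1 N2 N3 k1 k2)%:R
         <= C * ((N3%:R `^ (2 - alpha)) / jbr R (k1 - k2) + 1)) /\
    (forall k2 k3 : int,
       (card_S_k2k3 alpha C0 m N N1 N2 N3 k2 k3)%:R
         <= C * ((N1%:R `^ (2 - alpha)) / jbr R (k2 - k3) + 1)).
Proof.
move=> al12 C0p; have [al1 al2] : 1 < alpha /\ alpha < 2 by apply/andP.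
exists (16 * C0 / (alpha * (alpha - 1)) + 1); split.
  by rewrite ltr_pwDr // divr_ge0 //; nra.
move=> N N1 N2 N3 m _ _ _ _ /andP[_ /minn_idPr N1N] _ /andP[_ /minn_idPr N3N].
pose F z := abs_powR alpha z%:~R.
have band := card2_increment_band_le al12 (ltW C0p).
split; [|split; [|split]].
- move=> k k1; rewrite natr_min -jbrN opprB.
  apply: (band (m + F k - F k1)) => a b /inSE[e _ n2 ph [_ _ aN bN]].
  by split; [lia | lia | | | move: ph; congr (`|_| <= _); rewrite /F; ring].
- move=> k k3; rewrite natr_min -jbrN opprB.
  apply: (band (F k3 - F k - m)) => a b /inSE[e n1 _ ph [_ aN bN _]].
  by split; [lia | lia | | | rewrite -normrN; move: ph; congr (`|_| <= _); rewrite /F; ring].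
- move=> k1 k2; rewrite -[in N3%:R]N3N natr_min -jbrN opprB.
  apply: (band (m - F k1 + F k2)) => a b /inSE[e n1 _ ph [aN _ _ bN]].
  by split; [lia | lia | | | move: ph; congr (`|_| <= _); rewrite /F; ring].
- move=> k2 k3; rewrite -[in N1%:R]N1N natr_min.
  apply: (band (m + F k2 - F k3)) => a b /inSE[e _ n2 ph [aN bN _ _]].
  by split; [lia | lia | | | move: ph; congr (`|_| <= _); rewrite /F; ring].
Qed.
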